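(* Fix a time $t$. Let $\hat{\mathcal Z}_t$, $\hat{\mathcal Z}_{t+1}$ be Banach spaces, let $\mathfrak F_{\mathcal Y}$ and $\mathfrak F_{\hat{\mathcal Z}_{t+1}}$ be classes of uniformly bounded measurable real functions on $\mathcal Y$ and on $\hat{\mathcal Z}_{t+1}$ respectively, and let $\delta_t>0$. Let $\hat\sigma_t:\mathcal H_t\to\hat{\mathcal Z}_t$ and $\hat\sigma_{t+1}:\mathcal H_{t+1}\to\hat{\mathcal Z}_{t+1}$ be measurable history compression functions. Suppose: (AP2a) there is a measurable update function $\hat\varphi_t:\hat{\mathcal Z}_t\times\mathcal Y\times\mathcal A\to\hat{\mathcal Z}_{t+1}$ such that for every realization $h_{t+1}=(h_t,y_t,a_t)$ of $H_{t+1}$, $\hat\sigma_{t+1}(h_{t+1})=\hat\varphi_t(\hat\sigma_t(h_t),y_t,a_t)$; (AP2b) there is a measurable kernel $\hat P^y_t:\hat{\mathcal Z}_t\times\mathcal A\to\Delta(\mathcal Y)$ such that for every realization $h_t$ of $H_t$ and every $a_t\in\mathcal A$, setting $\mu^y_t(B)=\mathbb P(Y_t\in B\mid H_t=h_t,A_t=a_t)$ and $\nu^y_t(B)=\hat P^y_t(B\mid\hat\sigma_t(h_t),a_t)$ for Borel $B\subseteq\mathcal Y$, we have $d_{\mathfrak F_{\mathcal Y}}(\mu^y_t,\nu^y_t)\le \delta_t/\kappa_t$, where $\kappa_t=\sup_{h_t\in\mathcal H_t,\,a_t\in\mathcal A}\kappa_{\mathfrak F_{\mathcal Y},\mathfrak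 F_{\hat{\mathcal Z}_{t+1}}}\big(\hat\varphi_t(\hat\sigma_t(h_t),\cdot,a_t)\big)$. Define the kernel $\hat P_t:\hat{\mathcal Z}_t\times\mathcal A\to\Delta(\hat{\mathcal Z}_{t+1})$ by $\hat P_t(B\mid\hat\sigma_t(h_t),a_t)=\int_{\mathcal Y}\mathbf 1_B\big(\hat\varphi_t(\hat\sigma_t(h_t),y,a_t)\big)\,\hat P^y_t(dy\mid\hat\sigma_t(h_t),a_t)$ for Borel $B\subseteq\hat{\mathcal Z}_{t+1}$. Then (AP2) holds: for every realization $h_t$ of $H_t$ and every $a_t\in\mathcal A$, with $\mu_t(B)=\mathbb P(\hat\sigma_{t+1}(H_{t+1})\in B\mid H_t=h_t,A_t=a_t)$ and $\nu_t(B)=\hat P_t(B\mid\hat\sigma_t(h_t),a_t)$, we have $d_{\mathfrak F_{\hat{\mathcal Z}_{t+1}}}(\mu_t,\nu_t)\le\delta_t$.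
   Context: Setting: a stochastic input-output system over a finite horizon $t=1,\dots,T$. At each time $t$ an agent chooses an action $A_t$ in an action space $\mathcal A$; the system then produces an observation $Y_t$ in a measurable space $\mathcal Y$ and a real reward $R_t$. The history is $H_1=\emptyset$ and $H_{t+1}=(H_t,Y_t,A_t)$, i.e. $H_t=(Y_{1:t-1},A_{1:t-1})$, taking values in $\mathcal H_t$; the conditional law of $(Y_t,R_t)$ given $(H_t,A_t)$ is fixed by the system. Integral probability metric: for a class $\mathfrak F$ of uniformly bounded measurable real functions on a measurable space $\mathcal X$ and probability measures $\mu,\nu$ on $\mathcal X$, $d_{\mathfrak F}(\mu,\nu)=\sup_{f\in\mathfrak F}\left|\int f\,d\mu-\int f\,d\nu\right|$. Minkowski functional: $\rho_{\mathfrak F}(f)=\inf\{\rho>0:\rho^{-1}f\in\mathfrak F\}$. Contraction factor: for $\ell:\mathcal X\to\mathcal X'$ and function classes $\mathfrak F_{\mathcal X}$ on $\mathcal X$, $\mathfrak F_{\mathcal X'}$ on $\mathcal X'$, $\kappa_{\mathfrak F_{\mathcal X},\mathfrak F_{\mathcal X'}}(\ell)=\sup_{f\in\mathfrak F_{\mathcal X'}}\rho_{\mathfrak F_{\mathcal X}}(f\circ\ell)$. *)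

From HB Require Import structures.
From mathcomp Require Import all_boot all_order all_algebra.
From mathcomp Require Import all_classical all_reals all_analysis.

Set Implicit Arguments.
Unset Strict Implicit.
Unset Printing Implicit Defensive.

Import Order.TTheory GRing.Theory Num.Theory.
Local Open Scope classical_set_scope.
Local Open Scope ring_scope.

Section section3.
Context d1 d2 d3 d4 (Z : measurableType d1) (Y : measurableType d2)
  (A : measurableType d3) (W : measurableType d4).
Variables (phi : {mfun (Z * Y * A)%type >-> W}) (z : Z) (a : A).

Definition sect3 : Y -> W := fun y => phi (z, y, a).

Lemma sect3_measurable : measurable_fun [set: Y] sect3.
Proof.
apply: (measurableT_comp (@measurable_funPT _ _ _ _ phi)).
by apply: measurable_fun_pair => //; apply: measurable_fun_pair.
Qed.

HB.instance Definition _ := isMeasurableFun.Build _ _ _ _ sect3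
  sect3_measurable.
End section3.

Section push.
Local Open Scope ereal_scope.
Context d d' (T : measurableType d) (T' : measurableType d') (R : realType).
Variables (m : {measure set T -> \bar R}) (f : {mfun T >-> T'}).

Definition push : set T' -> \bar R := pushforward m f.

Let push0 : push set0 = 0.
Proof. exact: measure0. Qed.
Let push_ge0 B : 0 <= push B.
Proof. exact: measure_ge0. Qed.
Let push_sigma_additive : semi_sigma_additive push.
Proof. exact: measure_semi_sigma_additive. Qed.

HB.instance Definition _ := isMeasure.Build _ _ _ push
  push0 push_ge0 push_sigma_additive.
End push.

Definition ipm_dist d (X : measurableType d) (R : realType) (F : set (X -> R))
  (mu nu : {measure set X -> \bar R}) : \bar R :=
  ereal_sup [set `| (\int[mu]_x (f x)%:E - \int[nu]_x (f x)%:E)%E |%E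
             | f in F].

(* Minkowski functional rho_F(f) = inf { rho > 0 : rho^-1 f \in F }
   (inf of the empty set is +oo). *)
Definition minkowski_fun (X : Type) (R : realType) (F : set (X -> R))
  (f : X -> R) : \bar R :=
  ereal_inf [set r%:E | r in [set r : R | 0 < r /\ F (fun x => r^-1 * f x)]].

Definition contraction_factor (X X' : Type) (R : realType) (FX : set (X -> R))
  (FX' : set (X' -> R)) (l : X -> X') : \bar R :=
  ereal_sup [set minkowski_fun FX (f \o l) | f in FX'].

Definition ubm_class d (X : measurableType d) (R : realType)
  (F : set (X -> R)) : Prop :=
  (forall f, F f -> measurable_fun [set: X] f) /\
  exists M : R, forall f, F f -> forall x, `|f x| <= M.

(* The kernel hat P_t of the statement: hat P_t(. | z, a) is the image of
   hat P^y_t(. | z, a) under y |-> hat phi_t(z, y, a). *)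
Definition hatP d1 d2 d3 d4 (Z : measurableType d1) (Y : measurableType d2)
  (A : measurableType d3) (W : measurableType d4) (R : realType)
  (Py : R.-pker (Z * A)%type ~> Y) (phi : {mfun (Z * Y * A)%type >-> W})
  (z : Z) (a : A) : {measure set W -> \bar R} :=
  push (Py (z, a)) (sect3 phi z a).

Lemma hatPE d1 d2 d3 d4 (Z : measurableType d1) (Y : measurableType d2)
  (A : measurableType d3) (W : measurableType d4) (R : realType)
  (Py : R.-pker (Z * A)%type ~> Y) (phi : {mfun (Z * Y * A)%type >-> W})
  (z : Z) (a : A) (B : set W) : measurable B ->
  hatP Py phi z a B = (\int[Py (z, a)]_y (\1_B (phi (z, y, a)))%:E)%E.
Proof.
move=> mB.
have mpre : measurable (sect3 phi z a @^-1` B).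
  by rewrite -[X in measurable X]setTI; exact: sect3_measurable.
rewrite (_ : (fun y => _) = (fun y => (\1_(sect3 phi z a @^-1` B) y)%:E)).
  by rewrite integral_indic // setIT.
by apply/funext => y; rewrite !indicE.
Qed.

(* Fix f in F_{Z_{t+1}} and put g := f o phi_t(z, ., a), so that
   rho_{F_Y}(g) <= kappa_t.  By (AP2a) and change of variables for image
   measures, the integrals of f against mu_t and nu_t are those of g against
   mu^y_t and nu^y_t.  Whenever r^-1 g lies in F_Y these differ by at most
   r d_{F_Y}(mu^y_t, nu^y_t) <= r delta_t / kappa_t; taking the infimum over r
   they differ by at most rho_{F_Y}(g) delta_t / kappa_t <= delta_t.  When
   kappa_t = 0 the bound on d_{F_Y} is vacuous (delta_t / 0 = +oo), but then
   rho_{F_Y}(g) = 0 and the uniform bound on F_Y forces g = 0. *)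

From HB Require Import structures.
From mathcomp Require Import all_boot all_order all_algebra.
From mathcomp Require Import all_classical all_reals all_analysis.
From mathcomp Require Import lra.

Set Implicit Arguments.
Unset Strict Implicit.
Unset Printing Implicit Defensive.

Import Order.TTheory GRing.Theory Num.Theory.
Local Open Scope classical_set_scope.
Local Open Scope ring_scope.

Lemma bounded_fun_le (R : realType) (T : Type) (A : set T) (f : T -> R)
    (M : R) :
  (forall x, `|f x| <= M) -> [bounded f x | x in A].
Proof.
move=> fM; rewrite /bounded_near; near=> M' => x _ /=.
by apply: le_trans (fM x) _; near: M'; exact: nbhs_pinfty_ge (num_real M).
Unshelve. all: by end_near.
Qed.

Section bounded_integral.
Local Open Scope ereal_scope.
Context d (T : measurableType d) (R : realType).
Variable mu : {measure set T -> \bar R}.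
Hypothesis mu_fin : mu [set: T] < +oo.

Lemma integrable_bounded (g : T -> R) (M : R) :
  measurable_fun [set: T] g -> (forall x, (`|g x| <= M)%R) ->
  mu.-integrable [set: T] (EFin \o g).
Proof.
move=> mg gM; apply: measurable_bounded_integrable => //.
exact: bounded_fun_le gM.
Qed.

Lemma integral_push d' (T' : measurableType d') (s : {mfun T >-> T'})
    (f : T' -> R) (M : R) :
  measurable_fun [set: T'] f -> (forall x, (`|f x| <= M)%R) ->
  \int[push mu s]_x (f x)%:E = \int[mu]_x (f (s x))%:E.
Proof.
move=> mf fM; rewrite /push integral_pushforward //.
- exact/measurable_realfun.measurable_EFinP.
- rewrite preimage_setT.
  exact (integrable_bounded (measurableT_comp mf (measurable_funPT s))
    (fun x => fM (s x))).
Qed.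

End bounded_integral.

Lemma minkowski_fun_ge0 (X : Type) (R : realType) (F : set (X -> R))
    (g : X -> R) :
  (0 <= minkowski_fun F g)%E.
Proof.
by apply: le_ereal_inf_tmp => _ [r [r_gt0 _] <-]; rewrite lee_fin ltW.
Qed.

Lemma minkowski_fun_le0_eq0 (X : Type) (R : realType) (F : set (X -> R))
    (M : R) (g : X -> R) :
  (forall f, F f -> forall x, `|f x| <= M) ->
  (minkowski_fun F g <= 0)%E -> forall x, g x = 0.
Proof.
move=> FM g_le0 x; apply/normr0_eq0/eqP; rewrite eq_le normr_ge0 andbT.
have M1_gt0 : 0 < `|M| + 1 by rewrite ltr_wpDl.
suff : `|g x| / (`|M| + 1) <= 0 by rewrite ler_pdivrMr // mul0r.
rewrite -lee_fin (le_trans _ g_le0) //.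
apply: le_ereal_inf_tmp => _ [r [r_gt0 Fr] <-]; rewrite lee_fin ler_pdivrMr //.
have := FM _ Fr x; rewrite normrM gtr0_norm ?invr_gt0 // ler_pdivrMl // => gxM.
by apply: le_trans gxM _; rewrite ler_pM2l //; have := ler_norm M; lra.
Qed.

Section ipm_dist_minkowski.
Local Open Scope ereal_scope.
Context d (X : measurableType d) (R : realType) (F : set (X -> R)).
Variables (mu nu : {measure set X -> \bar R}) (g : X -> R).
Hypotheses (mu_g : mu.-integrable [set: X] (EFin \o g))
  (nu_g : nu.-integrable [set: X] (EFin \o g)).

Lemma abse_integralB_le_ipm_dist (r : R) : (0 < r)%R ->
  F (fun x => r^-1 * g x)%R ->
  `|\int[mu]_x (g x)%:E - \int[nu]_x (g x)%:E| <= r%:E * ipm_dist F mu nu.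
Proof.
move=> r_gt0 Fr; rewrite -lee_pdivrMl //.
have mu_fin := integrable_fin_num measurableT mu_g.
have nu_fin := integrable_fin_num measurableT nu_g.
apply: le_trans (ereal_sup_ubound _) => //=.
exists (fun x => r^-1 * g x)%R => //.
under eq_integral do rewrite EFinM.
under [X in _ - X]eq_integral do rewrite EFinM.
rewrite (integralZl measurableT mu_g) (integralZl measurableT nu_g).
rewrite -muleBr ?fin_num_adde_defl ?fin_numN // abseM.
by rewrite gee0_abs // lee_fin invr_ge0 ltW.
Qed.

Lemma abse_integralB_le_minkowski (c : R) : (0 < c)%R ->
  ipm_dist F mu nu <= c%:E ->
  `|\int[mu]_x (g x)%:E - \int[nu]_x (g x)%:E| <= minkowski_fun F g * c%:E.
Proof.
move=> c_gt0 ipm_le; rewrite -lee_pdivrMr //.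
apply: le_ereal_inf_tmp => _ [r [r_gt0 Fr] <-]; rewrite lee_pdivrMr //.
apply: le_trans (abse_integralB_le_ipm_dist r_gt0 Fr) _.
by apply: lee_wpmul2l ipm_le; rewrite lee_fin ltW.
Qed.

Lemma abse_integralB_le_minkowski_bound (M : R) (K : \bar R) (delta : R) :
  (forall f, F f -> forall x, (`|f x| <= M)%R) -> (0 < delta)%R ->
  minkowski_fun F g <= K -> K < +oo -> ipm_dist F mu nu <= delta%:E / K ->
  `|\int[mu]_x (g x)%:E - \int[nu]_x (g x)%:E| <= delta%:E.
Proof.
move=> FM delta_gt0 rho_le_K K_fin ipm_le.
have [K0|K_neq0] := eqVneq K 0.
  have rho_le0 : minkowski_fun F g <= 0 by rewrite -K0.
  have -> : (fun x => (g x)%:E) = cst 0.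
    by apply/funext => x; rewrite (minkowski_fun_le0_eq0 FM rho_le0).
  by rewrite !integral0 subee // abse0 lee_fin ltW.
have K_gt0 : 0 < K.
  by rewrite lt0e K_neq0 (le_trans (minkowski_fun_ge0 _ _) rho_le_K).
have KE : K = (fine K)%:E by rewrite fineK // ge0_fin_numE // ltW.
move: K_gt0 ipm_le; rewrite KE lte_fin inver => k_gt0.
rewrite gt_eqF // -EFinM => ipm_le.
have c_gt0 : (0 < delta / fine K)%R by exact: divr_gt0.
apply: le_trans (abse_integralB_le_minkowski c_gt0 ipm_le) _.
apply: le_trans (lee_wpmul2r _ rho_le_K) _.
  by rewrite lee_fin divr_ge0 ?ltW.
by rewrite KE -EFinM mulrCA mulfV ?gt_eqF // mulr1.
Qed.

End ipm_dist_minkowski.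

Theorem mainTheorem1
  (R : realType)
  (dY dA dH dZ dZ1 : measure_display)
  (Y : measurableType dY) (A : measurableType dA) (Ht : measurableType dH)
  (Zt : measurableType dZ) (Zt1 : measurableType dZ1)
  (* conditional law of Y_t given (H_t, A_t) = (h, a), fixed by the system *)
  (PY : Ht * A -> probability Y R)
  (FY : set (Y -> R)) (FZ1 : set (Zt1 -> R))
  (delta : R)
  (sigma_t : {mfun Ht >-> Zt})
  (sigma_t1 : {mfun (Ht * Y * A)%type >-> Zt1})
  (phi : {mfun (Zt * Y * A)%type >-> Zt1})
  (hatPy : R.-pker (Zt * A)%type ~> Y) :
  ubm_class FY -> ubm_class FZ1 ->
  0 < delta ->
  (* (AP2a) *)
  (forall (h : Ht) (y : Y) (a : A),
      sigma_t1 (h, y, a) = phi (sigma_t h, y, a)) ->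
  (* kappa_t is finite *)
  (ereal_sup [set contraction_factor FY FZ1 (sect3 phi (sigma_t p.1) p.2)
             | p in [set: Ht * A]] < +oo)%E ->
  (* (AP2b) *)
  (forall (h : Ht) (a : A),
      (ipm_dist FY (PY (h, a)) (hatPy (sigma_t h, a))
       <= delta%:E /
          ereal_sup [set contraction_factor FY FZ1 (sect3 phi (sigma_t p.1) p.2)
                    | p in [set: Ht * A]])%E) ->
  (* conclusion (AP2) *)
  forall (h : Ht) (a : A),
    (ipm_dist FZ1 (push (PY (h, a)) (sect3 sigma_t1 h a))
             (hatP hatPy phi (sigma_t h) a) <= delta%:E)%E.
Proof.
move=> [_ [MY FY_MY]] [mFZ1 [MZ1 FZ1_MZ1]] delta_gt0 AP2a kappa_fin AP2b h a.
apply: ge_ereal_sup => _ [f FZ1f <-].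
pose g := f \o sect3 phi (sigma_t h) a.
have mg : measurable_fun [set: Y] g :=
  measurableT_comp (mFZ1 f FZ1f) (measurable_funPT _).
have gM y : `|g y| <= MZ1 := FZ1_MZ1 f FZ1f _.
have PY_fin : (PY (h, a) [set: Y] < +oo)%E by rewrite probability_setT ltry.
have hatPy_fin : (hatPy (sigma_t h, a) [set: Y] < +oo)%E.
  by rewrite prob_kernel ltry.
rewrite /hatP (integral_push PY_fin (sect3 sigma_t1 h a)
  (mFZ1 f FZ1f) (FZ1_MZ1 f FZ1f)).
rewrite (integral_push hatPy_fin (sect3 phi (sigma_t h) a)
  (mFZ1 f FZ1f) (FZ1_MZ1 f FZ1f)).
have -> : (fun y => (f (sect3 sigma_t1 h a y))%:E) = (fun y => (g y)%:E).
  by apply/funext => y; exact: (congr1 (fun w => (f w)%:E) (AP2a h y a)).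
apply: (abse_integralB_le_minkowski_bound (integrable_bounded PY_fin mg gM)
  (integrable_bounded hatPy_fin mg gM) FY_MY delta_gt0 _ kappa_fin (AP2b h a)).
apply: (@le_trans _ _ (contraction_factor FY FZ1 (sect3 phi (sigma_t h) a))).
- by apply: ereal_sup_ubound; exists f.
- by apply: ereal_sup_ubound; exists (h, a).
Qed.
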